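(* Let $p\ge1$, $\phi_1,\dots,\phi_p:\mathbb Z\to\mathbb C$, $s\in\mathbb Z$, and let $y:\{s-p+1,s-p+2,\dots\}\to\mathbb C$ satisfy $y_t=\sum_{l=1}^p\phi_l(t)y_{t-l}$ for all $t\ge s+1$. Then for all $t\ge s-p+1$, $$y_t=\sum_{m=1}^{p}\xi^{(m)}_{t,s}\,y_{s-m+1}.$$
   Context: Convention: $\phi_l(t)=0$ for $l>p$. For integers $t>s$ and $1\le m\le p$, $\Phi^{(m)}_{t,s}$ is the $(t-s)\times(t-s)$ lower Hessenberg matrix whose $(i,j)$ entry is: $\phi_{m+i-1}(s+i)$ if $j=1$; $-1$ if $j=i+1$; $\phi_{i-j+1}(s+i)$ if $2\le j\le i$; $0$ if $j>i+1$. For $t\ge s-p+1$: $\xi^{(m)}_{t,s}=\det\Phi^{(m)}_{t,s}$ if $t>s$; $\xi^{(m)}_{t,s}=1$ if $t=s-m+1$; $\xi^{(m)}_{t,s}=0$ if $s-p+1\le t\le s$, $t\ne s-m+1$. *)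

From HB Require Import structures.
From mathcomp Require Import all_boot all_order all_algebra.
From mathcomp Require Import complex.
From mathcomp Require Import Rstruct.
Set Implicit Arguments. Unset Strict Implicit. Unset Printing Implicit Defensive.
Import Order.TTheory GRing.Theory Num.Theory.
Local Open Scope ring_scope.

Definition CC : Type := complex Rdefinitions.R.

(* phi_l(t), extended by the convention phi_l = 0 for l > p (and l = 0, never used). *)
Definition phic (p : nat) (phi : nat -> int -> CC) (l : nat) (t : int) : CC :=
  if (0 < l <= p)%N then phi l t else 0.

(* The (t-s) x (t-s) lower Hessenberg matrix Phi^{(m)}_{t,s}; indices are 0-based
   here: row i, column j correspond to the paper's (i+1, j+1). *)
Definition PhiMx (p : nat) (phi : nat -> int -> CC) (m : nat) (t s : int)
  : 'M[CC]_(`|t - s|%N) :=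
  \matrix_(i, j)
    if (j == 0 :> nat) then phic p phi (m + i) (s + (i.+1)%:Z)
    else if (j == i.+1 :> nat) then -1
    else if (j <= i)%N then phic p phi (i - j + 1) (s + (i.+1)%:Z)
    else 0.

(* xi^{(m)}_{t,s}, meaningful for t >= s - p + 1. *)
Definition xi (p : nat) (phi : nat -> int -> CC) (m : nat) (t s : int) : CC :=
  if s < t then \det (PhiMx p phi m t s)
  else if t == s - m%:Z + 1 then 1 else 0.

From HB Require Import structures.
From mathcomp Require Import all_boot all_order all_algebra.
From mathcomp Require Import complex.
From mathcomp Require Import Rstruct.
From mathcomp Require Import zify.
Import Order.TTheory GRing.Theory Num.Theory.
Local Open Scope ring_scope.

(* Solutions of the recurrence are determined by their values on the window
   [s-p+1 .. s], and on that window [xi^{(m)}_{.,s}] is the indicator of the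
   point [s-m+1]; so it suffices that every [xi^{(m)}_{.,s}] solves the
   recurrence.  For [t > s] this is the expansion of the lower Hessenberg
   determinant [det Phi^{(m)}_{t,s}] along its last row: the entries
   [phi_l(t)] pair with the leading minors [xi^{(m)}_{t-l,s}], and the
   first-column entry [phi_{m+t-s-1}(t)] is the single term reaching back into
   the window. *)

Lemma det_hessenberg (R : comPzRingType) n (f : nat -> nat -> R) :
    (forall i j, (i.+1 < j <= n)%N -> f i j = 0) ->
    (forall i, (i < n)%N -> f i i.+1 = -1) ->
  \det (\matrix_(i < n.+1, j < n.+1) f i j) =
  \sum_(k < n.+1) f n k * \det (\matrix_(i < k, j < k) f i j).
Proof.
elim: n f => [|n IH] f f_zero f_super.
  rewrite big_ord1 (expand_det_row _ ord0) big_ord1 /cofactor !mxE /= !det_mx00.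
  by rewrite expr0 mul1r mulr1.
set A := \matrix_(i < n.+2, j < n.+2) f i j.
have minor_last : row' ord_max (col' ord_max A) = \matrix_(i < n.+1, j < n.+1) f i j.
  by apply/matrixP => i j; rewrite !mxE !lift_max.
have minor_prev : row' (widen_ord (leqnSn n.+1) ord_max) (col' ord_max A) =
                  \matrix_(i < n.+1, j < n.+1) f (bump n i) j.
  by apply/matrixP => i j; rewrite !mxE lift_max.
have expand_prev : \det (\matrix_(i < n.+1, j < n.+1) f (bump n i) j) =
                   \sum_(k < n.+1) f n.+1 k * \det (\matrix_(i < k, j < k) f i j).
  rewrite (IH (fun i j => f (bump n i) j)) => [|i j /andP[ij jn]|i i_lt]; last 2 first.
  - by rewrite /bump leqNgt (leq_trans (ltnW ij) jn) add0n f_zero // ij (leqW jn).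
  - by rewrite /bump leqNgt i_lt f_super // ltnW.
  apply: eq_bigr => k _.
  have -> : \matrix_(i < k, j < k) f (bump n i) j = \matrix_(i < k, j < k) f i j.
    apply/matrixP => i j; rewrite !mxE /bump leqNgt (leq_trans (ltn_ord i)) //.
    by rewrite -ltnS.
  by rewrite /bump leqnn.
rewrite (expand_det_col _ ord_max) big_ord_recr big_ord_recr /=.
rewrite big1 ?add0r => [|i _]; last first.
  by rewrite mxE f_zero ?mul0r //= leqnn ltnS ltn_ord.
rewrite [RHS]big_ord_recr /= -expand_prev; congr (_ + _).
- rewrite /cofactor minor_prev mxE /= f_super // addnS addnn -signr_odd /= odd_double.
  by rewrite expr1 !mulN1r opprK.
- by rewrite /cofactor minor_last mxE addnn -signr_odd odd_double expr0 mul1r.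
Qed.

Lemma big_nat_single (R : nmodType) (F : nat -> R) a b k :
    (a <= k < b)%N -> (forall i, (a <= i < b)%N -> i != k -> F i = 0) ->
  \sum_(a <= i < b) F i = F k.
Proof.
move=> kab F0; have -> : \sum_(a <= i < b) F i = \sum_(a <= i < b | i == k) F i.
  rewrite [RHS]big_mkcond; apply: eq_big_nat => i iab.
  by case: eqP => [// | /eqP ik]; rewrite F0.
by rewrite big_nat1_eq kab.
Qed.

Section LinearRecurrence.
Variables (R : pzSemiRingType) (p : nat) (c : nat -> int -> R) (s : int).

Definition recurrence_solution (y : int -> R) :=
  forall t, s + 1 <= t -> y t = \sum_(1 <= l < p.+1) c l t * y (t - l%:Z).

Lemma recurrence_solution_unique y z :
    recurrence_solution y -> recurrence_solution z ->
    (forall t, s - p%:Z + 1 <= t <= s -> y t = z t) ->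
  forall t, s - p%:Z + 1 <= t -> y t = z t.
Proof.
move=> ysol zsol yz0.
suff yz : forall k : nat, forall t, s - p%:Z + 1 <= t < s - p%:Z + 1 + k%:Z -> y t = z t.
  by move=> t t_ge; apply: (yz (absz (t - s + p%:Z)%R)); lia.
elim=> [|k IH] t /andP[t_ge t_lt]; first lia.
have [t_le | t_gt] := lerP t s; first by apply: yz0; lia.
rewrite ysol ?zsol; [|lia..].
by apply: eq_big_nat => l /andP[l_ge l_lt]; rewrite IH //; lia.
Qed.

Lemma recurrence_solution_sum (I : eqType) (r : seq I) (x : I -> int -> R) (a : I -> R) :
    (forall i, i \in r -> recurrence_solution (x i)) ->
  recurrence_solution (fun t => \sum_(i <- r) x i t * a i).
Proof.
move=> xsol t t_gt.
rewrite big_seq (eq_bigr (fun i => \sum_(1 <= l < p.+1) c l t * (x i (t - l%:Z) * a i))).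
  by rewrite exchange_big; apply: eq_bigr => l _; rewrite -big_seq mulr_sumr.
by move=> i ir; rewrite (xsol i ir t t_gt) mulr_suml; apply: eq_bigr => l _; rewrite mulrA.
Qed.

End LinearRecurrence.

Arguments recurrence_solution {R} p c s y.

Section Xi.
Variables (p : nat) (phi : nat -> int -> CC) (s : int).

Lemma xi_le m t : t <= s -> xi p phi m t s = (t == s - m%:Z + 1)%:R.
Proof. by move=> t_le; rewrite /xi ltNge t_le /=; case: eqP. Qed.

(* The entries of [PhiMx] indexed by [nat], so that its leading minors are
   again determinants of this shape. *)
Definition Phi_entry m (i j : nat) : CC :=
  if j == 0 then phic p phi (m + i) (s + i.+1%:Z)
  else if j == i.+1 then -1
  else if (j <= i)%N then phic p phi (i - j + 1) (s + i.+1%:Z)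
  else 0.

Lemma xi_shift m (k : nat) : (0 < k)%N ->
  xi p phi m (s + k%:Z) s = \det (\matrix_(i < k, j < k) Phi_entry m i j).
Proof.
move=> k_gt0; rewrite /xi ltrDl ltz_nat k_gt0 /PhiMx.
by have -> : absz (s + k%:Z - s)%R = k by rewrite addrC addKr absz_nat.
Qed.

Lemma xi_succ m n (t := s + n.+1%:Z) :
  xi p phi m t s =
  phic p phi (m + n) t + \sum_(1 <= l < n.+1) phic p phi l t * xi p phi m (t - l%:Z) s.
Proof.
rewrite xi_shift // det_hessenberg; first last.
- by move=> i _; rewrite /Phi_entry eqxx.
- move=> i j /andP[ij _]; rewrite /Phi_entry (gtn_eqF (leq_trans (ltn0Sn _) ij)).
  by rewrite (gtn_eqF ij) leqNgt (ltn_trans (ltnSn _) ij).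
rewrite -(big_mkord xpredT
  (fun k => Phi_entry m n k * \det (\matrix_(i < k, j < k) Phi_entry m i j))).
rewrite big_ltn // det_mx00 mulr1 {1}/Phi_entry eqxx; congr (_ + _).
rewrite [RHS]big_nat_rev; apply: eq_big_nat => k /andP[k_ge k_lt].
have -> : (1 + n.+1 - k.+1 = n - k + 1)%N by lia.
have -> : t - (n - k + 1)%:Z = s + k%:Z by rewrite /t; lia.
by rewrite xi_shift // {1}/Phi_entry (gtn_eqF k_ge) (ltn_eqF k_lt) -ltnS k_lt.
Qed.

Lemma xi_solution m : (1 <= m <= p)%N -> recurrence_solution p phi s (xi p phi m ^~ s).
Proof.
move=> /andP[m_ge m_le] t t_gt.
have [n ->] : exists n : nat, t = s + n.+1%:Z by exists (absz (t - s)%R).-1; lia.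
set u := s + n.+1%:Z; rewrite xi_succ -/u.
(* [phic] vanishes beyond [p], so the sum may run up to [n + p]; its terms with
   [l > n] reach into the window, where only [l = n + m] survives. *)
have -> : \sum_(1 <= l < p.+1) phi l u * xi p phi m (u - l%:Z) s =
          \sum_(1 <= l < (n + p).+1) phic p phi l u * xi p phi m (u - l%:Z) s.
  rewrite [RHS](@big_cat_nat _ _ _ p.+1) //= ?ltnS ?leq_addl //.
  rewrite [X in _ = _ + X]big_nat_cond [X in _ = _ + X]big1 ?addr0; last first.
    by move=> l /andP[/andP[l_gt _] _]; rewrite /phic (leqNgt l p) l_gt andbF mul0r.
  by apply: eq_big_nat => l /andP[l_ge l_lt]; rewrite /phic l_ge -ltnS l_lt.
rewrite [RHS](@big_cat_nat _ _ _ n.+1) //= ?ltnS ?leq_addr // [RHS]addrC; congr (_ + _).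
have xi_tail l : (n < l)%N -> xi p phi m (u - l%:Z) s = (l == n + m)%:R.
  move=> l_gt; rewrite xi_le /u; last by lia.
  by have -> : (u - l%:Z == s - m%:Z + 1) = (l == n + m)%N
    by apply/idP/idP => /eqP l_eq; apply/eqP; rewrite /u in l_eq *; lia.
rewrite [RHS](@big_nat_single _ _ _ _ (n + m)); last 2 first.
- by apply/andP; split; lia.
- by move=> l /andP[l_gt _] /negbTE l_ne; rewrite xi_tail // l_ne mulr0.
by rewrite xi_tail ?eqxx ?mulr1 1?addnC //; lia.
Qed.

Lemma sum_xi_window (y : int -> CC) t : s - p%:Z + 1 <= t <= s ->
  \sum_(1 <= m < p.+1) xi p phi m t s * y (s - m%:Z + 1) = y t.
Proof.
move=> /andP[t_ge t_le].
rewrite (@big_nat_single _ _ _ _ (absz (s - t + 1)%R)); first last.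
- move=> m _ m_ne; rewrite xi_le //.
  by case: eqP => [t_eq | _]; [move/eqP: m_ne; lia | rewrite mul0r].
- lia.
rewrite xi_le //; have -> : t == s - (absz (s - t + 1)%R)%:Z + 1 by apply/eqP; lia.
by rewrite mul1r; congr y; lia.
Qed.

End Xi.

Theorem proposition3 (p : nat) (phi : nat -> int -> CC) (s : int) (y : int -> CC) :
  (1 <= p)%N ->
  (forall t : int, s + 1 <= t ->
     y t = \sum_(1 <= l < p.+1) phi l t * y (t - l%:Z)) ->
  forall t : int, s - p%:Z + 1 <= t ->
     y t = \sum_(1 <= m < p.+1) xi p phi m t s * y (s - m%:Z + 1).
Proof.
move=> _ ysol; apply: (@recurrence_solution_unique _ p phi s) => //.
- apply: recurrence_solution_sum => m; rewrite mem_index_iota => m_range.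
  exact: xi_solution.
- by move=> t t_window; rewrite sum_xi_window.
Qed.
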